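(* Let $\Gamma$ be a non-amenable group with property RD$_p$ for some $p\in[1,2]$. Then $\mathrm{Lit}(\Gamma)\ge p$.
   Context: For $1\le p<\infty$, $\Gamma$ has property RD$_p$ if there exist a length function $L$ on $\Gamma$ (i.e. $L\colon\Gamma\to[0,\infty)$ with $L(e)=0$, $L(g^{-1})=L(g)$, $L(gh)\le L(g)+L(h)$) and a polynomial $P$ such that $\|a\|_{p\to p}\le P(d)\|a\|_p$ for every $a\in\mathbf{C}[\Gamma]$ supported in the $L$-ball of radius $d\ge0$, where $\|a\|_{p\to p}$ is the operator norm of left convolution by $a$ on $\ell^p(\Gamma)$. $T_1(\Gamma)$ is the space of all $f\colon\Gamma\to\mathbf{C}$ for which there exist $f_1,f_2\colon\Gamma\times\Gamma\to\mathbf{C}$ with $f(x^{-1}y)=f_1(x,y)+f_2(x,y)$ for all $x,y$, $\sup_x\sum_y|f_1(x,y)|<\infty$, $\sup_y\sum_x|f_2(x,y)|<\infty$; $\mathrm{Lit}(\Gamma)=\inf\{q>0:T_1(\Gamma)\subseteq\ell^q(\Gamma)\}$. *)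

From HB Require Import structures.
From mathcomp Require Import all_boot all_order all_algebra.
From mathcomp Require Import all_classical all_reals all_analysis.
From mathcomp.real_closed Require Import complex.

Set Implicit Arguments.
Unset Strict Implicit.
Unset Printing Implicit Defensive.
Import Order.TTheory GRing.Theory Num.Theory.
Local Open Scope classical_set_scope.
Local Open Scope ring_scope.

Section Defs.
Variable R : realType.
Local Notation C := (R[i]).

Definition cabs (z : C) : R := let: Complex a b := z in Num.sqrt (a ^+ 2 + b ^+ 2).

(* A (discrete, possibly infinite) group given by its carrier (a choiceType,
   which is no restriction classically), multiplication, inverse and unit. *)
Variables (G : choiceType) (mul : G -> G -> G) (inv : G -> G) (e : G).

Definition is_group : Prop :=
  [/\ forall x y z, mul x (mul y z) = mul (mul x y) z,
      forall x, mul e x = x, forall x, mul x e = x,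
      forall x, mul (inv x) x = e & forall x, mul x (inv x) = e].

Definition amenable : Prop :=
  exists mu : set G -> R,
    [/\ forall A, 0 <= mu A, mu setT = 1,
        forall A B, A `&` B = set0 -> mu (A `|` B) = mu A + mu B
      & forall g A, mu ((mul g) @` A) = mu A].

Definition length_function (L : G -> R) : Prop :=
  [/\ forall g, 0 <= L g, L e = 0, forall g, L (inv g) = L g
    & forall g h, L (mul g h) <= L g + L h].

Definition supp (a : G -> C) : set G := [set x | a x != 0].
Definition finsupp (a : G -> C) : Prop := finite_set (supp a).

Definition lpnorm (p : R) (f : G -> C) : \bar R :=
  poweR (\esum_(x in [set: G]) ((cabs (f x)) `^ p)%:E) p^-1.

Definition in_lp (q : R) (f : G -> C) : Prop :=
  (\esum_(x in [set: G]) ((cabs (f x)) `^ q)%:E < +oo)%E.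

Definition lconv (a f : G -> C) : G -> C :=
  fun x => \sum_(y \in supp a) a y * f (mul (inv y) x).

Definition opnorm (p : R) (a : G -> C) : \bar R :=
  ereal_sup [set lpnorm p (lconv a f) | f in [set f | (lpnorm p f <= 1)%E]].

Definition RD (p : R) : Prop :=
  exists (L : G -> R) (P : {poly R}), length_function L /\
    forall (a : G -> C) (d : R), finsupp a -> 0 <= d ->
      supp a `<=` [set g | L g <= d] ->
      (opnorm p a <= (P.[d])%:E * lpnorm p a)%E.

Definition in_T1 (f : G -> C) : Prop :=
  exists f1 f2 : G -> G -> C,
    [/\ forall x y, f (mul (inv x) y) = f1 x y + f2 x y,
        exists M : R, forall x, (\esum_(y in [set: G]) (cabs (f1 x y))%:E <= M%:E)%E
      & exists M : R, forall y, (\esum_(x in [set: G]) (cabs (f2 x y))%:E <= M%:E)%E].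

Definition Lit : \bar R :=
  ereal_inf [set q%:E | q in [set q : R | 0 < q /\ forall f, in_T1 f -> in_lp q f]].

End Defs.

From Pilot Require Import Defs.
From HB Require Import structures.
From mathcomp Require Import all_boot all_order all_algebra.
From mathcomp Require Import all_classical all_reals all_analysis.
From mathcomp.real_closed Require Import complex.
From mathcomp Require Import ring lra finmap.

(* Suppose T_1(G) were contained in l^q(G) with q < p, and let S be a finite
   symmetric set in the L-ball of radius d.  By RD_p, convolution by c 1_S with
   c^-1 = (|P(d)| + 1) |S|^(1/p) is a contraction of l^p(G), so its iterates
   applied to the Dirac mass at e are bounded by 1; their dyadic average,
   re-based along the orbits of right multiplication by S, is a positive h
   with sum_(g in S) h(x g) <= C h(x), where C = 2 / c.  Comparing h(x) with
   h(y) splits 1_S(x^-1 y) into a part with row sums at most C and a part with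
   column sums at most C.  Hence f = sum_n 2^-(n+1) C_n^-1 1_(S_n) lies in
   T_1(G), and it escapes l^q(G) as soon as |S_n| (2^-(n+1) / C_n)^q >= n, that
   is as soon as |S_n|^(1 - q/p) is large compared with (|P(d_n)| + 1)^q.  If
   no such S_n exists, balls grow polynomially; then some ratio
   |B(n + j)| / |B(n)| is at most 1 + 1/j, these balls are Folner sets, and G
   is amenable. *)

Set Implicit Arguments.
Unset Strict Implicit.
Unset Printing Implicit Defensive.
Import Order.TTheory GRing.Theory Num.Theory numFieldNormedType.Exports.
Local Open Scope classical_set_scope.
Local Open Scope ring_scope.

Section RealInequalities.
Variable R : realType.

Lemma exp_dominates_monomial (r A : R) (M : nat) : 1 < r ->
  exists2 k : nat, (0 < k)%N & A * k%:R ^+ M < r ^+ k.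
Proof.
move=> r1; set l := ln r; have l0 : 0 < l := ln_gt0 r1.
have fact0 : 0 < M.+1`!%:R :> R by rewrite ltr0n fact_gt0.
set k := (Num.truncn (A * M.+1`!%:R / l ^+ M.+1)).+1.
have k0 : 0 < k%:R :> R by rewrite ltr0n.
exists k => //.
have kA : A < k%:R * l ^+ M.+1 / M.+1`!%:R.
  rewrite ltr_pdivlMr // -ltr_pdivrMr ?exprn_gt0 //; exact: truncnS_gt.
have -> : r ^+ k = expR (k%:R * l) by rewrite expRM_natl lnK // posrE; lra.
apply: lt_le_trans (expR_ge1Dxn M (mulr_ge0 (ltW k0) (ltW l0))).
apply: lt_le_trans (_ : _ < (k%:R * l) ^+ M.+1 / M.+1`!%:R) _; last by rewrite lerDr.
have -> : (k%:R * l) ^+ M.+1 / M.+1`!%:R = k%:R ^+ M * (k%:R * l ^+ M.+1 / M.+1`!%:R).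
  by rewrite exprMn exprS; ring.
by rewrite mulrC ltr_pM2l ?exprn_gt0.
Qed.

Lemma exp_dominates_powR (r K J D : R) : 1 < r -> 0 <= K -> 0 <= J -> 0 <= D ->
  exists k : nat, K * (1 + k%:R * J) `^ D < r ^+ k.
Proof.
move=> r1 K0 J0 D0; set M := (Num.truncn D).+1.
have [k k0 hk] := exp_dominates_monomial (K * (1 + J) ^+ M) M r1.
exists k; apply: le_lt_trans hk; rewrite -mulrA -exprMn ler_wpM2l //.
have k1 : 1 <= k%:R :> R by rewrite ler1n.
have X1 : 1 <= 1 + k%:R * J by rewrite lerDl mulr_ge0.
rewrite -powR_mulrn ?mulr_ge0 //; [|lra].
apply: le_trans (ler_powR X1 (ltW (truncnS_gt D))) _.
apply: ge0_ler_powR; rewrite ?nnegrE ?ler0n //; nra.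
Qed.

Lemma horner_norm_le (P : {poly R}) : exists2 A : R, 0 <= A &
  forall x : R, 0 <= x -> `|P.[x]| <= A * (1 + x) ^+ size P.
Proof.
exists (\sum_(i < size P) `|P`_i|) => [|x x0]; first exact: sumr_ge0.
rewrite horner_coef mulr_suml; apply: le_trans (ler_norm_sum _ _ _) _.
apply: ler_sum => i _; rewrite normrM normrX (ger0_norm x0) ler_wpM2l //.
apply: (@le_trans _ _ ((1 + x) ^+ i)); first by apply: lerXn2r; rewrite ?nnegrE; lra.
by apply: ler_weXn2l; [lra | exact: ltnW].
Qed.

Lemma powR_le1 (x r : R) : 0 <= x -> 0 < r -> x `^ r <= 1 -> x <= 1.
Proof.
move=> x0 r0 xr1; rewrite leNgt; apply/negP => x1.
by have := gt0_ltr_powR r0 ler01 x0 x1; rewrite powR1; lra.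
Qed.

Lemma powRV (x r : R) : 0 <= x -> x^-1 `^ r = (x `^ r)^-1.
Proof. by move=> x0; rewrite -powR_inv1 // -powRrM mulN1r powRN. Qed.

Lemma le_powRV_of_lt (x y a g : R) : 0 <= x -> 0 < a -> 0 < g ->
  x `^ g * a < y -> x <= (y / a) `^ g^-1.
Proof.
move=> x0 a0 g0 xy; have xya : x `^ g < y / a by rewrite ltr_pdivlMr.
rewrite -[leLHS](@powRr1 _ x) // -(mulfV (lt0r_neq0 g0)) powRrM.
apply: ge0_ler_powR (ltW xya); rewrite ?nnegrE ?invr_ge0 ?powR_ge0 ?(ltW g0) //.
exact/ltW/(le_lt_trans (powR_ge0 _ _) xya).
Qed.

End RealInequalities.

Section ExtendedSums.
Variable R : realType.
Local Open Scope ereal_scope.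

Lemma esumT_seq (T : choiceType) (s : seq T) (u : T -> \bar R) : uniq s ->
  (forall x, 0 <= u x) -> (forall x, x \notin s -> u x = 0) ->
  \esum_(x in [set: T]) u x = \sum_(x <- s) u x.
Proof.
move=> us u0 us0; rewrite (esumID [set` s]); last by move=> *; exact: u0.
rewrite [X in _ + X]esum1 ?adde0; last by move=> x [_ /= /negP]; exact: us0.
by rewrite setTI esum_fset // -fsbig_seq.
Qed.

Lemma esum_ge_term (T : choiceType) (u : T -> \bar R) (x : T) :
  (forall y, 0 <= u y) -> u x <= \esum_(y in [set: T]) u y.
Proof.
move=> u0; rewrite (esumID [set x]); last by move=> *; exact: u0.
by rewrite setTI esum_set1 // leeDl // esum_ge0.
Qed.

Lemma esum_swap (T1 T2 : choiceType) (u : T1 -> T2 -> \bar R) :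
  (forall i j, 0 <= u i j) ->
  \esum_(i in [set: T1]) \esum_(j in [set: T2]) u i j =
  \esum_(j in [set: T2]) \esum_(i in [set: T1]) u i j.
Proof.
move=> u0; rewrite !esum_esum //.
rewrite (reindex_esum ([set: T2] `*`` (fun=> [set: T1])) _ (fun x => (x.2, x.1))) //.
split=> //= [[i1 i2] [j1 j2] /= _ _ [-> ->] //|[i1 i2] _].
by exists (i2, i1).
Qed.

Lemma esumZl_nat (x : R) (u : nat -> \bar R) : (0 <= x)%R -> (forall k, 0 <= u k) ->
  \esum_(k in [set: nat]) (x%:E * u k) = x%:E * \esum_(k in [set: nat]) u k.
Proof.
move=> x0 u0; rewrite -!nneseries_esumT //; last by move=> k; rewrite mule_ge0.
by rewrite nneseriesZl.
Qed.

Lemma esum_shift_le (u : nat -> \bar R) : (forall k, 0 <= u k) ->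
  \esum_(k in [set: nat]) u k.+1 <= \esum_(k in [set: nat]) u k.
Proof.
move=> u0; rewrite -(esum_image setT succn u); last by move=> a b _ _ [].
rewrite esum_mkcond; apply: le_esum => k _.
by case: ifP.
Qed.

End ExtendedSums.

Lemma sum_subseq_dist (R : realType) (T : eqType) (s1 s2 t : seq T) (F : T -> R) :
  uniq s1 -> uniq s2 -> uniq t -> {subset s1 <= t} -> {subset s2 <= t} ->
  (forall x, 0 <= F x <= 1) ->
  `|\sum_(x <- s1) F x - \sum_(x <- s2) F x|
    <= 2 * (size t)%:R - (size s1)%:R - (size s2)%:R.
Proof.
move=> u1 u2 ut s1t s2t F01.
have on_t s : uniq s -> {subset s <= t} -> forall G : T -> R,
    \sum_(x <- s) G x = \sum_(x <- t) (if x \in s then G x else 0).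
  move=> us st G; rewrite -big_mkcond /= -[RHS]big_filter; apply: perm_big.
  apply: uniq_perm; rewrite ?filter_uniq // => x.
  by rewrite mem_filter; case: (boolP (x \in s)) => //= /st ->.
have size_on_t s : uniq s -> {subset s <= t} ->
    (size s)%:R = \sum_(x <- t) (if x \in s then 1 else 0) :> R.
  by move=> us st; rewrite -(on_t s) // -sum1_size natr_sum.
rewrite (on_t s1) // (on_t s2) // -sumrB (size_on_t s1) // (size_on_t s2) //.
rewrite -[size t]sum1_size natr_sum mulr_sumr -!sumrB.
apply: le_trans (ler_norm_sum _ _ _) _; apply: ler_sum => x _.
have /andP [F0 F1] := F01 x.
case: (x \in s1); case: (x \in s2);
  rewrite ?subrr ?normr0 ?subr0 ?sub0r ?normrN ?ger0_norm //; lra.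
Qed.

Definition dyadic {R : realType} (k : nat) : R := (2 ^ k.+1)%:R^-1.

(* [fine] sends an infinite sum to [0]; every [u] used below takes values in
   [0, 1], so that the sum is at most [1] (see [dyadic_sumE]). *)
Definition dyadic_sum {R : realType} (u : nat -> R) : R :=
  fine (\esum_(k in [set: nat]) (dyadic k * u k)%:E).

Section DyadicSums.
Variable R : realType.

Lemma dyadic_gt0 k : 0 < dyadic k :> R.
Proof. by rewrite invr_gt0 ltr0n expn_gt0. Qed.

Lemma dyadic_ge0 k : 0 <= dyadic k :> R.
Proof. exact/ltW/dyadic_gt0. Qed.

Lemma dyadicS k : dyadic k.+1 = dyadic k / 2 :> R.
Proof. by rewrite /dyadic expnS natrM invfM mulrC. Qed.

Lemma esum_dyadic : (\esum_(k in [set: nat]) (dyadic k : R)%:E = 1)%E.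
Proof.
rewrite -nneseries_esumT => [|n]; last by rewrite lee_fin dyadic_ge0.
have := @cvg_geometric_eseries_half R 1 0; rewrite expr0 divr1.
under eq_fun do rewrite addn1 div1r.
exact: cvg_lim.
Qed.

Variable u : nat -> R.
Hypothesis u01 : forall k, 0 <= u k <= 1.

Let term_ge0 k : (0 <= (dyadic k * u k)%:E)%E.
Proof. by case/andP: (u01 k) => u0 _; rewrite lee_fin mulr_ge0 ?dyadic_ge0. Qed.

Let esum_le1 : (\esum_(k in [set: nat]) (dyadic k * u k)%:E <= 1)%E.
Proof.
rewrite -esum_dyadic; apply: le_esum => k _; rewrite lee_fin.
by case/andP: (u01 k) => _ u1; exact: ler_piMr (dyadic_ge0 k) u1.
Qed.

Lemma dyadic_sumE : (dyadic_sum u)%:E = \esum_(k in [set: nat]) (dyadic k * u k)%:E.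
Proof.
by rewrite fineK // ge0_fin_numE ?esum_ge0 // (le_lt_trans esum_le1) ?ltry.
Qed.

Lemma dyadic_sum_ge_term k : dyadic k * u k <= dyadic_sum u.
Proof. by rewrite -lee_fin dyadic_sumE; exact: esum_ge_term. Qed.

Lemma dyadic_sum_ge0 : 0 <= dyadic_sum u.
Proof. by rewrite -lee_fin dyadic_sumE esum_ge0. Qed.

End DyadicSums.

Lemma dyadic_sumD (R : realType) (u v : nat -> R) :
  (forall k, 0 <= u k) -> (forall k, 0 <= v k) -> (forall k, u k + v k <= 1) ->
  dyadic_sum (u \+ v) = dyadic_sum u + dyadic_sum v.
Proof.
move=> u0 v0 uv1.
have u01 k : 0 <= u k <= 1 by rewrite u0 /=; have := v0 k; have := uv1 k; lra.
have v01 k : 0 <= v k <= 1 by rewrite v0 /=; have := u0 k; have := uv1 k; lra.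
have uv01 k : 0 <= (u \+ v) k <= 1 by rewrite /= addr_ge0 ?uv1.
apply: EFin_inj; rewrite EFinD !dyadic_sumE // -esumD => [|k _|k _]; last 2 first.
- by rewrite lee_fin mulr_ge0 ?dyadic_ge0.
- by rewrite lee_fin mulr_ge0 ?dyadic_ge0.
by apply: eq_esum => k _; rewrite /= mulrDr.
Qed.

Lemma sum_dyadic_sum_le (R : realType) (I : choiceType) (s : seq I)
    (v : I -> nat -> R) (u : nat -> R) (A : R) :
  0 <= A -> (forall i k, 0 <= v i k <= 1) -> (forall k, 0 <= u k <= 1) ->
  (forall k, \sum_(i <- s) v i k <= A * u k.+1) ->
  \sum_(i <- s) dyadic_sum (v i) <= 2 * A * dyadic_sum u.
Proof.
move=> A0 v01 u01 vu.
have v0 i k : 0 <= v i k by case/andP: (v01 i k).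
have u0 k : 0 <= u k by case/andP: (u01 k).
rewrite -lee_fin -sumEFin EFinM dyadic_sumE //.
under eq_bigr do rewrite dyadic_sumE //.
rewrite -esum_sum => [|k i _ _]; last by rewrite lee_fin mulr_ge0 ?dyadic_ge0.
apply: (@le_trans _ _ (\esum_(k in [set: nat]) ((2 * A)%:E * (dyadic k.+1 * u k.+1)%:E))%E).
  apply: le_esum => k _; rewrite sumEFin -EFinM lee_fin -mulr_sumr dyadicS.
  have -> : 2 * A * (dyadic k / 2 * u k.+1) = dyadic k * (A * u k.+1) by field.
  by rewrite ler_wpM2l ?dyadic_ge0.
rewrite esumZl_nat ?mulr_ge0 // => [|k]; last by rewrite lee_fin mulr_ge0 ?dyadic_ge0.
rewrite lee_wpmul2l ?lee_fin ?mulr_ge0 //.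
by apply: esum_shift_le => k; rewrite lee_fin mulr_ge0 ?dyadic_ge0.
Qed.

Section GroupLaws.
Variables (G : choiceType) (mul : G -> G -> G) (inv : G -> G) (e : G).
Hypothesis Hg : is_group mul inv e.

Lemma gmulA x y z : mul x (mul y z) = mul (mul x y) z. Proof. by case: Hg. Qed.
Lemma gmul1 x : mul e x = x. Proof. by case: Hg. Qed.
Lemma gmulg1 x : mul x e = x. Proof. by case: Hg. Qed.
Lemma gmulVg x : mul (inv x) x = e. Proof. by case: Hg. Qed.
Lemma gmulgV x : mul x (inv x) = e. Proof. by case: Hg. Qed.
Lemma gmulKg x y : mul (inv x) (mul x y) = y.
Proof. by rewrite gmulA gmulVg gmul1. Qed.
Lemma gmulKVg x y : mul x (mul (inv x) y) = y.
Proof. by rewrite gmulA gmulgV gmul1. Qed.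
Lemma gmul_inj x : injective (mul x).
Proof. by move=> y z yz; rewrite -(gmulKg x y) yz gmulKg. Qed.
Lemma ginvK x : inv (inv x) = x.
Proof. by rewrite -{2}(gmulKg (inv x) x) gmulVg gmulg1. Qed.
Lemma ginvM x y : inv (mul x y) = mul (inv y) (inv x).
Proof.
apply: (@gmul_inj (mul x y)); rewrite gmulgV -gmulA (gmulA y) gmulgV gmul1.
by rewrite gmulgV.
Qed.

End GroupLaws.

Lemma ultra_cvg_bounded (R : realType) (T : Type) (U : set_system T) (w : T -> R) (a b : R) :
  UltraFilter U -> (forall n, a <= w n <= b) -> cvg (w n @[n --> U]).
Proof.
move=> UU wab; have PU : ProperFilter U := @ultra_proper _ _ UU.
have [l [_ l_cl]] : exists l, `[a, b]%classic l /\ cluster (w n @[n --> U]) l.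
  by apply: segment_compact => //=; apply: nearW => n; rewrite /= in_itv /=.
apply/cvg_ex; exists l => N Nl.
case: (in_ultra_setVsetC (w @^-1` N) UU) => // wNc.
by have [z [? ?]] := l_cl (~` N) N wNc Nl.
Qed.

Section SlowGrowthAmenable.
Variable R : realType.
Variables (G : choiceType) (mul : G -> G -> G) (inv : G -> G) (e : G).
Hypothesis Hg : is_group mul inv e.
Variable L : G -> R.
Hypothesis HL : length_function mul inv e L.

Lemma length_e : L e = 0. Proof. by case: HL. Qed.
Lemma length_inv x : L (inv x) = L x. Proof. by case: HL. Qed.
Lemma length_mul x y : L (mul x y) <= L x + L y. Proof. by case: HL. Qed.

Definition len_ball (d : R) : set G := [set x | L x <= d].

Hypothesis ball_finite : forall n : nat, finite_set (len_ball n%:R).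

Definition ball_seq (n : nat) : seq G := enum_fset (fset_set (len_ball n%:R)).

Lemma ball_seq_uniq n : uniq (ball_seq n).
Proof. exact: fset_uniq. Qed.

Lemma mem_ball_seq n x : (x \in ball_seq n) = (L x <= n%:R).
Proof. by rewrite /ball_seq in_fset_set //; apply/idP/idP => [/set_mem|/mem_set]. Qed.

Lemma size_ball_seq_gt0 n : (0 < size (ball_seq n))%N.
Proof.
have : e \in ball_seq n by rewrite mem_ball_seq length_e.
by case: ball_seq.
Qed.

Definition ball_mean (n : nat) (A : set G) : R :=
  (\sum_(x <- ball_seq n) (x \in A)%:R) / (size (ball_seq n))%:R.

Lemma ball_mean_itv n A : 0 <= ball_mean n A <= 1.
Proof.
have s0 : 0 < (size (ball_seq n))%:R :> R by rewrite ltr0n size_ball_seq_gt0.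
rewrite divr_ge0 ?sumr_ge0 //= ler_pdivrMr // mul1r -sum1_size natr_sum.
by apply: ler_sum => x _; rewrite lern1 leq_b1.
Qed.

Lemma ball_meanT n : ball_mean n setT = 1.
Proof.
rewrite /ball_mean (eq_bigr (fun=> 1)) => [|x _]; last by rewrite in_setT.
have -> : \sum_(x <- ball_seq n) (1 : R) = (size (ball_seq n))%:R.
  by rewrite -sum1_size natr_sum.
by rewrite divff // pnatr_eq0 -lt0n size_ball_seq_gt0.
Qed.

Lemma ball_meanU n A B : A `&` B = set0 ->
  ball_mean n (A `|` B) = ball_mean n A + ball_mean n B.
Proof.
move=> AB0; rewrite /ball_mean -mulrDl -big_split /=; congr (_ / _).
apply: eq_bigr => x _; rewrite in_setU -natrD; congr (_%:R).
case: (boolP (x \in A)) => xA; case: (boolP (x \in B)) => xB //=.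
by move: AB0; rewrite -subset0 => /(_ x) []; split; apply/set_mem.
Qed.

Lemma ball_mean_translate g A n j : (0 < j)%N -> L g <= j%:R ->
  (j * size (ball_seq (n + j)) <= j.+1 * size (ball_seq n))%N ->
  `|ball_mean n (mul g @` A) - ball_mean n A| <= 2 / j%:R.
Proof.
move=> j0 Lg growth; set s := ball_seq n; set t := ball_seq (n + j).
have sizes0 : 0 < (size s)%:R :> R by rewrite ltr0n size_ball_seq_gt0.
have mem_gA x : (x \in mul g @` A) = (mul (inv g) x \in A).
  apply/idP/idP => [/set_mem [y yA <-]|/set_mem gxA].
    by rewrite (gmulKg Hg); apply: mem_set.
  by apply: mem_set; exists (mul (inv g) x); rewrite ?(gmulKVg Hg).
have -> : ball_mean n (mul g @` A) =
    (\sum_(y <- map (mul (inv g)) s) (y \in A)%:R) / (size s)%:R.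
  by rewrite /ball_mean big_map; congr (_ / _); apply: eq_bigr => x _; rewrite mem_gA.
rewrite /ball_mean -/s -mulrBl normrM normfV (gtr0_norm sizes0) ler_pdivrMr //.
apply: le_trans (@sum_subseq_dist R G _ s t (fun y => (y \in A)%:R) _ _ _ _ _ _) _.
- by rewrite map_inj_uniq ?ball_seq_uniq //; exact: (gmul_inj Hg).
- exact: ball_seq_uniq.
- exact: ball_seq_uniq.
- move=> y /mapP [x xs ->]; rewrite mem_ball_seq natrD.
  apply: le_trans (length_mul _ _) _; rewrite length_inv addrC lerD //.
  by rewrite -mem_ball_seq.
- by move=> x; rewrite !mem_ball_seq natrD => /le_trans; apply; rewrite lerDl.
- by move=> x; rewrite ler0n lern1 leq_b1.
have jr0 : 0 < j%:R :> R by rewrite ltr0n.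
rewrite size_map -/t; move: growth; rewrite -(ler_nat R) !natrM -natr1.
rewrite mulrAC ler_pdivlMr //; nra.
Qed.

Lemma ball_mean_translate_cvg (N : nat -> nat) g A :
  (forall j, (0 < j)%N -> (j * size (ball_seq (N j + j)) <= j.+1 * size (ball_seq (N j)))%N) ->
  ball_mean (N j) (mul g @` A) - ball_mean (N j) A @[j --> \oo] --> 0.
Proof.
move=> growth; apply/cvgrPdist_le => eps eps0.
exists ((Num.truncn (L g)).+1 + (Num.truncn (2 / eps)).+1)%N => // j /= hj.
have j0 : (0 < j)%N by apply: leq_trans hj; rewrite addSn.
have Lg : L g <= j%:R.
  apply: le_trans (ltW (truncnS_gt (L g))) _; rewrite ler_nat.
  by apply: leq_trans hj; exact: leq_addr.
have epsj : 2 / eps < j%:R.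
  apply: lt_le_trans (truncnS_gt _) _; rewrite ler_nat.
  by apply: leq_trans hj; exact: leq_addl.
rewrite sub0r normrN; apply: le_trans (ball_mean_translate A j0 Lg (growth j j0)) _.
by rewrite ler_pdivrMr ?ltr0n // mulrC -ler_pdivrMr // ltW.
Qed.

(* The invariant mean is an ultrafilter limit of the uniform averages over the
   balls [B (N j)], which are almost invariant under translation by elements of
   length at most [j]. *)
Theorem amenable_of_slow_ball_growth :
  (forall j, (0 < j)%N -> exists n, (j * size (ball_seq (n + j)) <= j.+1 * size (ball_seq n))%N) ->
  amenable R mul.
Proof.
move=> slow.
have /choice [N growth] : forall j, exists n, (0 < j)%N ->
    (j * size (ball_seq (n + j)) <= j.+1 * size (ball_seq n))%N.
  move=> j; case: (posnP j) => [->|j0]; first by exists 0%N.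
  by have [n ?] := slow j j0; exists n.
have [U [UU finer]] := @ultraFilterLemma nat \oo _.
have PU : ProperFilter U := @ultra_proper _ _ UU.
pose mean_at A j := ball_mean (N j) A.
have cv A : cvg (mean_at A j @[j --> U]).
  exact: ultra_cvg_bounded UU (fun j => ball_mean_itv (N j) A).
exists (fun A => lim (mean_at A j @[j --> U])); split.
- move=> A; apply: limr_ge => //; apply: nearW => j.
  by case/andP: (ball_mean_itv (N j) A).
- have -> : mean_at setT = fun=> 1 by apply: funext => j; rewrite /mean_at ball_meanT.
  exact: lim_cst.
- move=> A B AB0.
  have -> : mean_at (A `|` B) = mean_at A + mean_at B.
    by apply: funext => j; rewrite /mean_at ball_meanU.
  by rewrite limD.
- move=> g A.
  have diff0 : mean_at (mul g @` A) j - mean_at A j @[j --> U] --> 0.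
    by move=> M /(ball_mean_translate_cvg g A growth) /finer.
  have -> : mean_at (mul g @` A) = mean_at A + (mean_at (mul g @` A) - mean_at A).
    by apply: funext => j; rewrite /= addrC subrK.
  by rewrite limD ?(cvg_lim _ diff0) ?addr0 //; apply/cvg_ex; exists 0.
Qed.

End SlowGrowthAmenable.

Definition sym_ball_seq (R : realType) (G : choiceType) (inv : G -> G) (L : G -> R)
    (d : R) (s : seq G) : Prop :=
  [/\ uniq s, {in s, forall g, L g <= d} & {in s, forall g, inv g \in s}].

Section PolynomialGrowthAmenable.
Variable R : realType.
Variables (G : choiceType) (mul : G -> G -> G) (inv : G -> G) (e : G).
Hypothesis Hg : is_group mul inv e.
Variable L : G -> R.
Hypothesis HL : length_function mul inv e L.
Variables K D : R.
Hypotheses (K0 : 0 <= K) (D0 : 0 <= D).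
Hypothesis poly_growth : forall (d : R) (s : seq G), 0 <= d ->
  sym_ball_seq inv L d s -> (size s)%:R <= K * (1 + d) `^ D.

Lemma ball_finite_of_poly_growth (n : nat) : finite_set (len_ball L n%:R).
Proof.
apply: contrapT => ball_inf.
have [M KM] : exists M : nat, K * (1 + n%:R) `^ D < M%:R.
  by exists (Num.truncn (K * (1 + n%:R) `^ D)).+1; exact: truncnS_gt.
have [B Bball MB] := infinite_set_fset M ball_inf.
set b := enum_fset B; set t := undup (b ++ map inv b).
have bt : (size b <= size t)%N.
  by apply: uniq_leq_size => [|x xb]; rewrite ?fset_uniq // mem_undup mem_cat xb.
have t_sym : sym_ball_seq inv L n%:R t.
  split=> [|g|g]; rewrite ?undup_uniq // !mem_undup !mem_cat.
    by case/orP => [/Bball //|/mapP [x /Bball xb ->]]; rewrite (length_inv HL).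
  by case/orP => [gb|/mapP [x xb ->]]; rewrite ?(ginvK Hg) ?xb // map_f ?orbT.
have := poly_growth (ler0n _ n) t_sym.
by have := leq_trans MB bt; rewrite -(ler_nat R); lra.
Qed.

Lemma size_ball_seq_le (n : nat) : (size (ball_seq L n))%:R <= K * (1 + n%:R) `^ D.
Proof.
have mem_ball := mem_ball_seq ball_finite_of_poly_growth n.
apply: poly_growth; first exact: ler0n.
split=> [|g|g]; rewrite ?ball_seq_uniq // !mem_ball //.
by rewrite (length_inv HL).
Qed.

Lemma ball_slow_growth (j : nat) : (0 < j)%N ->
  exists n, (j * size (ball_seq L (n + j)) <= j.+1 * size (ball_seq L n))%N.
Proof.
move=> j0; apply: contrapT => fast.
have fast_n n : (j.+1 * size (ball_seq L n) < j * size (ball_seq L (n + j)))%N.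
  by rewrite ltnNge; apply/negP => slow; apply: fast; exists n.
have geometric k : (j.+1 ^ k <= j ^ k * size (ball_seq L (k * j)))%N.
  elim: k => [|k IH].
    by rewrite !expn0 mul1n (size_ball_seq_gt0 HL ball_finite_of_poly_growth).
  rewrite expnS (expnS j) [(k.+1 * j)%N]mulSnr.
  apply: leq_trans (leq_mul (leqnn j.+1) IH) _.
  rewrite -mulnA mulnCA [(j * (_ * _))%N]mulnCA leq_mul2l.
  by apply/orP; right; exact: ltnW (fast_n _).
have r1 : 1 < j.+1%:R / j%:R :> R by rewrite ltr_pdivlMr ?ltr0n // mul1r ltr_nat.
have [k Kk] := exp_dominates_powR r1 K0 (ler0n R j) D0.
have := size_ball_seq_le (k * j); rewrite natrM.
have : (j.+1%:R / j%:R) ^+ k <= (size (ball_seq L (k * j)))%:R :> R.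
  rewrite expr_div_n ler_pdivrMr ?exprn_gt0 ?ltr0n // mulrC -!natrX -natrM ler_nat.
  exact: geometric.
lra.
Qed.

Theorem amenable_of_poly_growth : amenable R mul.
Proof.
apply: (amenable_of_slow_ball_growth Hg HL ball_finite_of_poly_growth).
exact: ball_slow_growth.
Qed.

End PolynomialGrowthAmenable.

Section LpFacts.
Variable R : realType.
Variable G : choiceType.
Variable p : R.
Hypothesis p0 : 0 < p.

Lemma cabs_real (r : R) : cabs (r%:C)%C = `|r|.
Proof. by rewrite /cabs /= expr0n /= addr0 sqrtr_sqr. Qed.

Lemma cabs_ge0 (z : R[i]) : 0 <= cabs z.
Proof. by case: z => a b; exact: sqrtr_ge0. Qed.


Lemma lpnorm_le1_cabs (f : G -> R[i]) w : (lpnorm p f <= 1)%E -> cabs (f w) <= 1.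
Proof.
rewrite /lpnorm; set S := \esum_(x in _) _ => Sp1.
have S0 : (0 <= S)%E by apply: esum_ge0 => x _; rewrite lee_fin powR_ge0.
have S1 : (S <= 1)%E.
  move: Sp1 S0; case: S => [r| |] //; last by rewrite eqy_poweR // invr_gt0.
  by rewrite poweR_EFin !lee_fin => rp1 r0; apply: powR_le1 rp1; rewrite ?invr_gt0.
apply: powR_le1 p0 _; rewrite ?cabs_ge0 // -lee_fin; apply: le_trans S1.
by apply: esum_ge_term => x; rewrite lee_fin powR_ge0.
Qed.

Lemma lpnorm_scaled_indicator (s : seq G) (c : R) : uniq s -> 0 <= c ->
  lpnorm p (fun y => ((if y \in s then c else 0)%:C)%C) = ((size s)%:R `^ p^-1 * c)%:E.
Proof.
move=> us c0; rewrite /lpnorm (esumT_seq us) => [||x xs]; last 2 first.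
- by move=> x; rewrite lee_fin powR_ge0.
- by rewrite (negPf xs) cabs_real normr0 powR0 // gt_eqF.
rewrite (eq_big_seq (fun=> (c `^ p)%:E)) => [|x xs]; last by rewrite xs cabs_real ger0_norm.
rewrite sumEFin (_ : \sum_(x <- s) c `^ p = (size s)%:R * c `^ p); last first.
  by rewrite -sum1_size natr_sum mulr_suml; apply: eq_bigr => _ _; rewrite mul1r.
rewrite poweR_EFin powRM ?powR_ge0 // -powRrM mulfV ?gt_eqF // powRr1 //.
Qed.

End LpFacts.

Definition schur_weight (R : realType) (G : choiceType) (mul : G -> G -> G)
    (S : seq G) (C : R) (h : G -> R) : Prop :=
  (forall x, 0 < h x) /\ forall x, \sum_(g <- S) h (mul x g) <= C * h x.

Section SchurWeightFromRD.
Variable R : realType.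
Variables (G : choiceType) (mul : G -> G -> G) (inv : G -> G) (e : G).
Hypothesis Hg : is_group mul inv e.
Variable p : R.
Hypothesis p0 : 0 < p.
Variables (L : G -> R) (P : {poly R}).
Hypothesis HRD : forall (a : G -> R[i]) (d : R), Defs.finsupp a -> 0 <= d ->
  supp a `<=` [set g | L g <= d] -> (opnorm mul inv p a <= (P.[d])%:E * lpnorm p a)%E.
Variables (s : seq G) (d : R).
Hypotheses (s_sym : sym_ball_seq inv L d s) (s_nil : s != [::]) (d0 : 0 <= d).

Let c : R := ((`|P.[d]| + 1) * (size s)%:R `^ p^-1)^-1.

Let c_gt0 : 0 < c.
Proof.
by rewrite invr_gt0 mulr_gt0 ?powR_gt0 ?ltr0n ?lt0n ?size_eq0.
Qed.

Let a (y : G) : R[i] := ((if y \in s then c else 0)%:C)%C.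

Fixpoint conv_iter (k : nat) (w : G) : R :=
  if k is k'.+1 then \sum_(g <- s) c * conv_iter k' (mul (inv g) w)
  else if w == e then 1 else 0.

Let supp_a : supp a = [set` s].
Proof.
apply/seteqP; split => y /=; rewrite /supp /a /=; case: ifP => // ys.
  by rewrite eqxx.
by move=> _; rewrite fmorph_eq0 gt_eqF.
Qed.

Let lconv_conv_iter k :
  lconv mul inv a (fun w => (conv_iter k w)%:C%C) = fun w => (conv_iter k.+1 w)%:C%C.
Proof.
apply: funext => w; rewrite /lconv supp_a -fsbig_seq //=; last by case: s_sym.
rewrite raddf_sum.
by apply: eq_big_seq => g gs; rewrite /a gs -rmorphM.
Qed.

Let conv_iter_ge0 k w : 0 <= conv_iter k w.
Proof.
elim: k w => [|k IH] w /=; first by case: ifP.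
by apply: sumr_ge0 => g _; rewrite mulr_ge0 ?IH // ltW.
Qed.

Let opnorm_a_le1 : (opnorm mul inv p a <= 1)%E.
Proof.
case: s_sym => us s_ball _.
apply: le_trans (HRD (d := d) _ d0 _) _.
- by rewrite /Defs.finsupp supp_a; exact: finite_seq.
- by rewrite supp_a => g /= /s_ball.
rewrite lpnorm_scaled_indicator ?(ltW c_gt0) // -EFinM lee_fin.
have P1 : 0 < `|P.[d]| + 1 by rewrite ltr_pwDr ?normr_ge0.
have -> : (size s)%:R `^ p^-1 * c = (`|P.[d]| + 1)^-1.
  by rewrite /c invfM mulrCA mulfV ?mulr1 // gt_eqF ?powR_gt0 ?ltr0n ?lt0n ?size_eq0.
by rewrite ler_pdivrMr // mul1r (le_trans (ler_norm _)) // lerDl.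
Qed.

Let lpnorm_conv_iter k : (lpnorm p (fun w => (conv_iter k w)%:C%C) <= 1)%E.
Proof.
elim: k => [|k IH].
  have -> : (fun w => (conv_iter 0 w)%:C%C) = fun w => ((if w \in [:: e] then 1 else 0)%:C)%C.
    by apply: funext => w; rewrite mem_seq1.
  by rewrite lpnorm_scaled_indicator // powR1 mulr1.
rewrite -lconv_conv_iter; apply: le_trans opnorm_a_le1.
by apply: ereal_sup_ubound; exists (fun w => (conv_iter k w)%:C%C).
Qed.

Let conv_iter01 k w : 0 <= conv_iter k w <= 1.
Proof.
rewrite conv_iter_ge0 /=.
by have := lpnorm_le1_cabs p0 w (lpnorm_conv_iter k); rewrite cabs_real ger0_norm.
Qed.

Let H (w : G) : R := dyadic_sum (conv_iter ^~ w).

Let sum_H_le w : \sum_(g <- s) H (mul (inv g) w) <= 2 / c * H w.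
Proof.
apply: (@sum_dyadic_sum_le _ _ _ (fun g k => conv_iter k (mul (inv g) w))) => // [|k].
  by rewrite invr_ge0 ltW.
by rewrite /= -mulr_sumr mulKf ?gt_eqF.
Qed.

Let H_e_gt0 : 0 < H e.
Proof.
apply: lt_le_trans (dyadic_sum_ge_term (conv_iter01 ^~ e) 0).
by rewrite /= eqxx mulr1 dyadic_gt0.
Qed.

Let H_gt0_shift g w : g \in s -> 0 < H (mul (inv g) w) -> 0 < H w.
Proof.
move=> gs Hgw; have H_ge0 x : 0 <= H x := dyadic_sum_ge0 (conv_iter01 ^~ x).
rewrite lt0r H_ge0 andbT; apply/negP => /eqP Hw0.
have := sum_H_le w; rewrite Hw0 mulr0; apply/negP; rewrite -ltNge.
rewrite (bigD1_seq g) //=; last by case: s_sym.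
by apply: lt_le_trans Hgw _; rewrite lerDl sumr_ge0.
Qed.

(* Positivity of [H] propagates along right multiplication by [s], so [rep x]
   only depends on the orbit of [x]; translating [H] by [rep] makes it
   positive everywhere. *)
Let rep (x : G) : G := xget e [set y | 0 < H (mul (inv x) y)].

Let rep_mul x g : g \in s -> rep (mul x g) = rep x.
Proof.
move=> gs; rewrite /rep; congr (xget e _).
have [_ _ s_inv] := s_sym.
apply/seteqP; split => y /=; rewrite (ginvM Hg) -(gmulA Hg); first exact: H_gt0_shift.
by move=> Hy; apply: (H_gt0_shift (s_inv _ gs)); rewrite (ginvK Hg) (gmulKVg Hg).
Qed.

Lemma schur_weight_of_RD_nonempty :
  exists h, schur_weight mul s (2 * ((`|P.[d]| + 1) * (size s)%:R `^ p^-1)) h.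
Proof.
exists (fun x => H (mul (inv x) (rep x))); split => [x|x].
  rewrite /rep; apply: (xgetPex e (P := [set y | 0 < H (mul (inv x) y)])).
  by exists x; rewrite /= (gmulVg Hg); exact: H_e_gt0.
rewrite -[(`|P.[d]| + 1) * _]invrK -/c.
rewrite (eq_big_seq (fun g => H (mul (inv g) (mul (inv x) (rep x))))) ?sum_H_le //.
by move=> g gs; rewrite rep_mul // (ginvM Hg) -(gmulA Hg).
Qed.

End SchurWeightFromRD.

Lemma schur_weight_of_RD (R : realType) (G : choiceType) (mul : G -> G -> G)
    (inv : G -> G) (e : G) (p : R) (L : G -> R) (P : {poly R}) (s : seq G) (d : R) :
  is_group mul inv e -> 0 < p ->
  (forall (a : G -> R[i]) (d : R), Defs.finsupp a -> 0 <= d ->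
    supp a `<=` [set g | L g <= d] -> (opnorm mul inv p a <= (P.[d])%:E * lpnorm p a)%E) ->
  sym_ball_seq inv L d s -> 0 <= d ->
  exists h, schur_weight mul s (2 * ((`|P.[d]| + 1) * (size s)%:R `^ p^-1)) h.
Proof.
move=> Hg p0 HRD s_sym d0; have [->|s_nil] := eqVneq s [::].
  exists (fun=> 1); split=> // x; rewrite big_nil mulr1.
  by rewrite mulr_ge0 ?mulr_ge0 ?powR_ge0 ?addr_ge0.
by have := schur_weight_of_RD_nonempty Hg p0 HRD s_sym s_nil d0.
Qed.

Lemma schur_weight_count (R : realType) (G : choiceType) (mul : G -> G -> G)
    (S : seq G) (C : R) (h : G -> R) x :
  schur_weight mul S C h -> \sum_(g <- S) (if h x <= h (mul x g) then 1 else 0) <= C.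
Proof.
move=> [h_gt0 h_sum]; rewrite -(ler_pM2r (h_gt0 x)) mulr_suml.
apply: le_trans (h_sum x); apply: ler_sum => g _.
by case: ifP; rewrite ?mul1r ?mul0r // => _; exact: ltW.
Qed.

Lemma esum_dyadic_sum_le1 (R : realType) (T : choiceType) (u : nat -> T -> R)
    (t : nat -> seq T) :
  (forall k y, 0 <= u k y <= 1) -> (forall k, uniq (t k)) ->
  (forall k y, y \notin t k -> u k y = 0) -> (forall k, \sum_(y <- t k) u k y <= 1) ->
  (\esum_(y in [set: T]) (dyadic_sum (u ^~ y))%:E <= 1)%E.
Proof.
move=> u01 t_uniq u_out u_sum.
have term_ge0 k y : (0 <= (dyadic k * u k y)%:E)%E.
  by case/andP: (u01 k y) => u0 _; rewrite lee_fin mulr_ge0 ?dyadic_ge0.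
under eq_esum do rewrite dyadic_sumE //.
rewrite esum_swap // -esum_dyadic; apply: le_esum => k _.
rewrite (esumT_seq (t_uniq k)) // => [|y /u_out ->]; last by rewrite mulr0.
by rewrite sumEFin lee_fin -mulr_sumr ler_piMr ?dyadic_ge0.
Qed.

Section T1OutsideLq.
Variable R : realType.
Variables (G : choiceType) (mul : G -> G -> G) (inv : G -> G) (e : G).
Hypothesis Hg : is_group mul inv e.
Variable q : R.
Hypothesis q0 : 0 < q.
Variables (S : nat -> seq G) (C : nat -> R) (h : nat -> G -> R).
Hypothesis S_uniq : forall n, uniq (S n).
Hypothesis S_sym : forall n, {in S n, forall g, inv g \in S n}.
Hypothesis h_schur : forall n, schur_weight mul (S n) (C n) (h n).
Hypothesis C_ge1 : forall n, 1 <= C n.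
Hypothesis S_large : forall n, n%:R <= (size (S n))%:R * (dyadic n / C n) `^ q.

Let C_gt0 n : 0 < C n. Proof. exact: lt_le_trans (C_ge1 n). Qed.

Let ind_div01 (b : bool) n : 0 <= (if b then 1 else 0) / C n <= 1.
Proof.
rewrite divr_ge0 ?(ltW (C_gt0 n)) /= ?ler_pdivrMr // ?mul1r; last by case: b.
by apply: le_trans (C_ge1 n); case: b.
Qed.

Let ind_div_ge0 (b : bool) n : 0 <= (if b then 1 else 0) / C n.
Proof. by case/andP: (ind_div01 b n). Qed.

Let f (g : G) : R := dyadic_sum (fun n => (if g \in S n then 1 else 0) / C n).
Let f1 (x y : G) : R := dyadic_sum (fun n =>
  (if (mul (inv x) y \in S n) && (h n x <= h n y) then 1 else 0) / C n).
Let f2 (x y : G) : R := dyadic_sum (fun n =>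
  (if (mul (inv x) y \in S n) && (h n y < h n x) then 1 else 0) / C n).

Let f_split x y : f (mul (inv x) y) = f1 x y + f2 x y.
Proof.
rewrite /f1 /f2 -dyadic_sumD => [|n|n|n]; rewrite ?ind_div_ge0 //.
  congr dyadic_sum; apply: funext => n /=; rewrite -mulrDl ltNge.
  by case: (_ \in _); case: (h n x <= h n y); rewrite ?addr0 ?add0r.
rewrite /= -mulrDl ler_pdivrMr // mul1r (le_trans _ (C_ge1 n)) // ltNge.
by case: (_ \in _); case: (h n x <= h n y).
Qed.

Let f1_row x : (\esum_(y in [set: G]) (f1 x y)%:E <= 1)%E.
Proof.
apply: (esum_dyadic_sum_le1 (t := fun n => map (mul x) (S n))) => [n y|n|n y|n].
- exact: ind_div01.
- by rewrite map_inj_uniq //; exact: (gmul_inj Hg).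
- move=> y_out; case: ifP => [/andP [xy_in _]|_]; last by rewrite mul0r.
  by move: y_out; rewrite -{1}(gmulKVg Hg x y) map_f.
rewrite big_map -mulr_suml ler_pdivrMr // mul1r.
apply: le_trans (schur_weight_count x (h_schur n)); apply: ler_sum => g _.
rewrite (gmulKg Hg); case: (h n x <= _); rewrite ?andbT ?andbF //.
by case: (g \in S n); rewrite ?ler01.
Qed.

Let f2_col y : (\esum_(x in [set: G]) (f2 x y)%:E <= 1)%E.
Proof.
apply: (esum_dyadic_sum_le1 (t := fun n => map (mul y) (S n))) => [n x|n|n x|n].
- exact: ind_div01.
- by rewrite map_inj_uniq //; exact: (gmul_inj Hg).
- move=> x_out; case: ifP => [/andP [xy_in _]|_]; last by rewrite mul0r.
  move: x_out (S_sym xy_in); rewrite (ginvM Hg) (ginvK Hg) => /negP x_out yx_in.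
  by case: x_out; apply/mapP; exists (mul (inv y) x); rewrite ?(gmulKVg Hg).
rewrite big_map -mulr_suml ler_pdivrMr // mul1r.
apply: le_trans (schur_weight_count y (h_schur n)); apply: ler_sum => g _.
case: (boolP (h n y < _)) => [/ltW ->|_]; rewrite ?andbT ?andbF; last by case: ifP.
by case: (_ \in _); rewrite ?ler01.
Qed.

Let f_large n : (n%:R%:E <= \esum_(g in [set: G]) ((cabs (f g)%:C%C) `^ q)%:E)%E.
Proof.
have f_ge0 g : 0 <= f g by apply: dyadic_sum_ge0 => k; exact: ind_div01.
apply: le_trans (_ : (\esum_(g in [set: G])
    (if g \in S n then (dyadic n / C n) `^ q else 0)%:E <= _)%E).
  rewrite (esumT_seq (S_uniq n)) => [||g /negPf ->] //; last first.
    by move=> g; case: ifP; rewrite lee_fin ?powR_ge0.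
  rewrite (eq_big_seq (fun=> ((dyadic n / C n) `^ q)%:E)) => [|g ->] //.
  rewrite sumEFin lee_fin (le_trans (S_large n)) //.
  by rewrite -sum1_size natr_sum mulr_suml; under eq_bigr do rewrite mul1r.
apply: le_esum => g _; case: ifP => gS; rewrite lee_fin ?powR_ge0 //.
rewrite cabs_real ger0_norm // ge0_ler_powR ?nnegrE ?divr_ge0 ?dyadic_ge0 ?(ltW q0) //.
  by apply: ltW.
have := dyadic_sum_ge_term (fun k => ind_div01 (g \in S k) k) n.
by rewrite gS mulrA mulr1.
Qed.

Lemma T1_not_subset_lp : exists f : G -> R[i], in_T1 mul inv f /\ ~ in_lp q f.
Proof.
have cabs_dyadic (u : nat -> R) : (forall k, 0 <= u k <= 1) ->
    (cabs (dyadic_sum u)%:C%C)%:E = (dyadic_sum u)%:E.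
  by move=> u01; rewrite cabs_real ger0_norm // dyadic_sum_ge0.
have cabs_f1 x y : (cabs (f1 x y)%:C%C)%:E = (f1 x y)%:E.
  by apply: cabs_dyadic => n; exact: ind_div01.
have cabs_f2 x y : (cabs (f2 x y)%:C%C)%:E = (f2 x y)%:E.
  by apply: cabs_dyadic => n; exact: ind_div01.
exists (fun g => (f g)%:C%C); split.
  exists (fun x y => (f1 x y)%:C%C), (fun x y => (f2 x y)%:C%C); split.
  - by move=> x y; rewrite f_split rmorphD.
  - by exists 1 => x; rewrite (eq_esum (fun y _ => cabs_f1 x y)); exact: f1_row.
  - by exists 1 => y; rewrite (eq_esum (fun x _ => cabs_f2 x y)); exact: f2_col.
rewrite /in_lp; set M := \esum_(g in _) _ => M_fin.
have M_ge0 : (0 <= M)%E by apply: esum_ge0 => g _; rewrite lee_fin powR_ge0.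
move: M_fin M_ge0 (f_large (Num.truncn (fine M)).+1); rewrite -/M.
case: M => [r| |] // _ _; rewrite lee_fin /=.
by have := truncnS_gt r; lra.
Qed.

End T1OutsideLq.

Section SchurConstant.
Variable R : realType.

Lemma schur_massE (N Q w p q : R) : 0 < N -> 0 < Q -> 0 <= w ->
  N * (w / (2 * (Q * N `^ p^-1))) `^ q = N `^ (1 - q / p) * (w / (2 * Q)) `^ q.
Proof.
move=> N0 Q0 w0; have NpV0 : 0 < N `^ p^-1 by exact: powR_gt0.
rewrite [w / _](_ : _ = w / (2 * Q) * (N `^ p^-1)^-1); last first.
  by rewrite !invfM; field; rewrite !gt_eqF.
have wQ0 : 0 <= w / (2 * Q) by rewrite divr_ge0 // mulr_ge0 ?ler0n // ltW.
rewrite powRM ?invr_ge0 ?(ltW NpV0) // -powRN -powRrM.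
rewrite mulrCA -{1}[N]powRr1 ?(ltW N0) // -powRD; last by apply/implyP => _; rewrite gt_eqF.
by rewrite [LHS]mulrC mulNr [p^-1 * q]mulrC.
Qed.



Lemma schur_const_ge1 (x p : R) (N : nat) : 0 < p -> (0 < N)%N ->
  1 <= 2 * ((`|x| + 1) * N%:R `^ p^-1).
Proof.
move=> p0 N0; have N1 : 1 <= N%:R :> R by rewrite ler1n.
have Np1 : 1 <= N%:R `^ p^-1.
  by have := ler_powR N1 (_ : 0 <= p^-1); rewrite powRr0; apply; rewrite invr_ge0 ltW.
by have := normr_ge0 x; nra.
Qed.

End SchurConstant.

Lemma poly_growth_of_small_schur_mass (R : realType) (G : choiceType) (inv : G -> G)
    (L : G -> R) (P : {poly R}) (p q w B : R) :
  0 < q -> q < p -> 0 < w ->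
  (forall d s, 0 <= d -> sym_ball_seq inv L d s -> s != [::] ->
    (size s)%:R * (w / (2 * ((`|P.[d]| + 1) * (size s)%:R `^ p^-1))) `^ q < B) ->
  exists K D : R, [/\ 0 <= K, 0 <= D & forall d s, 0 <= d -> sym_ball_seq inv L d s ->
    (size s)%:R <= K * (1 + d) `^ D].
Proof.
move=> q0 qp w0 small; have [A A0 PA] := horner_norm_le P.
pose g : R := 1 - q / p; have g0 : 0 < g by rewrite subr_gt0 ltr_pdivrMr ?mul1r //; lra.
have qg0 : 0 <= q / g by rewrite divr_ge0 ?ltW.
exists ((B * (2 / w) `^ q) `^ g^-1 * (A + 1) `^ (q / g)), ((size P)%:R * (q / g)).
split=> [||d s d0 s_sym].
- exact: mulr_ge0 (powR_ge0 _ _) (powR_ge0 _ _).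
- exact: mulr_ge0 (ler0n _ _) qg0.
have [->|s_nil] := eqVneq s [::]; first by apply: mulr_ge0; rewrite ?mulr_ge0 ?powR_ge0.
have N0 : 0 < (size s)%:R :> R by rewrite ltr0n lt0n size_eq0.
pose Q : R := `|P.[d]| + 1; have Q0 : 0 < Q by rewrite ltr_pwDr ?normr_ge0.
have wQ0 : 0 < w / (2 * Q) by rewrite divr_gt0 ?mulr_gt0.
have := small d s d0 s_sym s_nil; rewrite schur_massE ?(ltW w0) // => small_s.
have B0 : 0 < B.
  by apply: le_lt_trans small_s; rewrite mulr_ge0 ?powR_ge0.
apply: le_trans (le_powRV_of_lt (ler0n _ _) (powR_gt0 _ wQ0) g0 small_s) _.
have -> : B / (w / (2 * Q)) `^ q = B * (2 / w) `^ q * Q `^ q.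
  by rewrite -powRV ?(ltW wQ0) // invf_div mulrAC powRM ?divr_ge0 ?(ltW w0) ?(ltW Q0) ?mulrA.
rewrite powRM ?mulr_ge0 ?powR_ge0 ?(ltW B0) // -powRrM -mulrA ler_wpM2l ?powR_ge0 //.
have Q_le : Q <= (A + 1) * (1 + d) ^+ size P.
  have X1 : 1 <= (1 + d) ^+ size P by rewrite exprn_ege1 // lerDl.
  by have := PA d d0; rewrite /Q; nra.
apply: le_trans (ge0_ler_powR qg0 _ _ Q_le) _; rewrite ?nnegrE; try lra.
have d1 : 0 <= 1 + d by lra.
have -> : (1 + d) `^ ((size P)%:R * (q / g)) = ((1 + d) ^+ size P) `^ (q / g).
  by rewrite powRrM powR_mulrn.
by rewrite powRM ?exprn_ge0 //; lra.
Qed.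

Lemma large_schur_sets (R : realType) (G : choiceType) (mul : G -> G -> G)
    (inv : G -> G) (e : G) (L : G -> R) (P : {poly R}) (p q : R) (n : nat) :
  is_group mul inv e -> length_function mul inv e L -> ~ amenable R mul ->
  0 < q -> q < p ->
  exists s d, [/\ sym_ball_seq inv L d s, 0 <= d, s != [::] &
    n%:R <= (size s)%:R * (dyadic n / (2 * ((`|P.[d]| + 1) * (size s)%:R `^ p^-1))) `^ q].
Proof.
move=> Hg HL non_amenable q0 qp; apply: contrapT => small; apply: non_amenable.
have := poly_growth_of_small_schur_mass (inv := inv) (L := L) (P := P) (B := n%:R)
  q0 qp (dyadic_gt0 R n).
case=> [d s d0 s_sym s_nil|K [D [K0 D0 growth]]].
  by rewrite ltNge; apply/negP => large; apply: small; exists s, d.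
exact: (amenable_of_poly_growth Hg HL K0 D0 growth).
Qed.


Unset Implicit Arguments.

Theorem corollary8p2 (R : realType) (G : choiceType) (mul : G -> G -> G)
    (inv : G -> G) (e : G) (p : R) :
  is_group mul inv e -> ~ amenable R mul ->
  1 <= p <= 2 -> RD mul inv e p ->
  (p%:E <= Lit R mul inv)%E.
Proof.
move=> Hg non_amenable /andP [p1 _] [L [P [HL HRD]]]; have p0 : 0 < p by lra.
apply: le_ereal_inf_tmp => _ [q [q0 T1_lq] <-]; rewrite lee_fin leNgt; apply/negP => qp.
have /choice [S /choice [d /all_and4 [S_sym d0 S_nil S_large]]] n :=
  large_schur_sets P n Hg HL non_amenable q0 qp.
pose C n := 2 * ((`|P.[d n]| + 1) * (size (S n))%:R `^ p^-1).
have /choice [h h_schur] n : exists h, schur_weight mul (S n) (C n) h.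
  exact: schur_weight_of_RD Hg p0 HRD (S_sym n) (d0 n).
have C_ge1 n : 1 <= C n by apply: schur_const_ge1; rewrite // lt0n size_eq0.
have S_uniq n : uniq (S n) by case: (S_sym n).
have S_inv n : {in S n, forall g, inv g \in S n} by case: (S_sym n).
have [f [f_T1 f_not_lq]] := T1_not_subset_lp Hg q0 S_uniq S_inv h_schur C_ge1 S_large.
exact: f_not_lq (T1_lq f f_T1).
Qed.
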